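(* Let $\mathbb F_q$ be a finite field with $q>2$ elements and let $\mathbb F_q^*=\mathbb F_q\setminus\{0\}$. In the integral group ring $\mathbb Z[\mathrm{SL}_2(\mathbb F_q)]$ consider the seven elements $$A=\left(\begin{array}{cc}\mathbb F_q^*&0\\0&\mathbb F_q^*\end{array}\right),\ B=\left(\begin{array}{cc}0&\mathbb F_q^*\\\mathbb F_q^*&0\end{array}\right),\ C=\left(\begin{array}{cc}\mathbb F_q^*&\mathbb F_q^*\\\mathbb F_q^*&\mathbb F_q^*\end{array}\right),$$ $$D_+=\left(\begin{array}{cc}\mathbb F_q^*&\mathbb F_q^*\\0&\mathbb F_q^*\end{array}\right),\ D_-=\left(\begin{array}{cc}\mathbb F_q^*&0\\\mathbb F_q^*&\mathbb F_q^*\end{array}\right),\ E_+=\left(\begin{array}{cc}\mathbb F_q^*&\mathbb F_q^*\\\mathbb F_q^*&0\end{array}\right),\ E_-=\left(\begin{array}{cc}0&\mathbb F_q^*\\\mathbb F_q^*&\mathbb F_q^*\end{array}\right)$$ (notation explained in the context). Then the $\mathbb Z$-module $$\mathcal{SC}=\mathbb Z A+\mathbb Z B+\mathbb ZC+\mathbb ZD_++\mathbb ZD_-+\mathbb Z E_++\mathbb Z E_-$$ is a subring of $\mathbb Z[\mathrm{SL}_2(\mathbb F_q)]$, i.e. it is closed under the multiplication of the group ring (the product of any two of the seven elements is an integral linear combination of the seven elements).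
   Context: For subsets $\mathcal A,\mathcal B,\mathcal C,\mathcal D$ of $\mathbb F_q$, the symbol $\left(\begin{array}{cc}\mathcal A&\mathcal B\\\mathcal C&\mathcal D\end{array}\right)$ denotes the element $\sum \left(\begin{array}{cc}a&b\\c&d\end{array}\right)$ of $\mathbb Z[\mathrm{SL}_2(\mathbb F_q)]$, where the sum runs over all $(a,b,c,d)\in\mathcal A\times\mathcal B\times\mathcal C\times\mathcal D$ with $ad-bc=1$; an entry $0$ stands for the singleton $\{0\}$. Thus the seven elements are the sums of all matrices of $\mathrm{SL}_2(\mathbb F_q)$ having a prescribed support (set of positions of nonzero entries). The ring $\mathcal{SC}$ need not contain the identity element of the group ring. *)

From mathcomp Require Import all_boot all_order all_algebra all_field.
Set Implicit Arguments. Unset Strict Implicit. Unset Printing Implicit Defensive.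
Import GRing.Theory.
Local Open Scope ring_scope.

(* The group ring Z[SL_2(F)] is modelled as integer-valued functions on
   2x2 matrices over F that vanish off SL_2(F) = {m | det m = 1};
   the group ring product is convolution over SL_2(F). *)

Definition inSL2 (F : finFieldType) (m : 'M[F]_2) : bool := \det m == 1.

Definition grmul (F : finFieldType) (f g : 'M[F]_2 -> int) : 'M[F]_2 -> int :=
  fun x => \sum_(a : 'M[F]_2 | inSL2 a)
             \sum_(b : 'M[F]_2 | inSL2 b && (a *m b == x)) f a * g b.

Definition entry_ok (F : finFieldType) (nz : bool) (x : F) : bool :=
  if nz then x != 0 else x == 0.

(* sum of all matrices of SL_2(F) with prescribed support
   [[pa, pb], [pc, pd]] (true = nonzero). *)
Definition supp_elt (F : finFieldType) (pa pb pc pd : bool) : 'M[F]_2 -> int :=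
  fun m => (entry_ok pa (m ord0 ord0) && entry_ok pb (m ord0 ord_max) &&
            entry_ok pc (m ord_max ord0) && entry_ok pd (m ord_max ord_max) &&
            inSL2 m)%:Z.

Definition elA  (F : finFieldType) := @supp_elt F true  false false true.
Definition elB  (F : finFieldType) := @supp_elt F false true  true  false.
Definition elC  (F : finFieldType) := @supp_elt F true  true  true  true.
Definition elDp (F : finFieldType) := @supp_elt F true  true  false true.
Definition elDm (F : finFieldType) := @supp_elt F true  false true  true.
Definition elEp (F : finFieldType) := @supp_elt F true  true  true  false.
Definition elEm (F : finFieldType) := @supp_elt F false true  true  true.

Definition inSC (F : finFieldType) (f : 'M[F]_2 -> int) : Prop :=
  exists a b c dp dm ep em : int, forall m : 'M[F]_2,
    f m = a * elA m + b * elB m + c * elC m + dp * elDp m + dm * elDm m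
          + ep * elEp m + em * elEm m.

From mathcomp Require Import all_boot all_order all_algebra all_field.
From mathcomp Require Import ring.
Set Implicit Arguments. Unset Strict Implicit. Unset Printing Implicit Defensive.
Import GRing.Theory.
Local Open Scope ring_scope.

(* A function on SL_2(F) lies in SC as soon as it depends only on the support
   pattern of the matrix, because every element of SL_2(F) has one of the seven
   patterns of the statement.  On the other hand, A, ..., E- are integral
   combinations of the indicators of H and wH, where w is a Weyl element and H is
   one of SL_2, the two Borel subgroups B+ and B-, and the diagonal torus T;
   conjugation by w permutes this family.  Moving the factors w to the left
   reduces a product of two such indicators to a w-translate of 1_H 1_K, and
   1_H 1_K = |H ∩ K| 1_HK, where HK is one of the four subgroups or one of the
   big cells {a ≠ 0} = B- B+ and {d ≠ 0} = B+ B-.  All of these sets, and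
   their w-translates, are unions of support patterns. *)

Section SL2GroupRing.

Variable F : finFieldType.
Local Notation M := 'M[F]_2.
Local Notation i0 := (@ord0 1).
Local Notation i1 := (@ord_max 1).

Lemma ord2P (i : 'I_2) : i = i0 \/ i = i1.
Proof. by case: i => [[|[|//]] lti]; [left | right]; apply: val_inj. Qed.

Lemma mx2_eq (m n : M) :
    m i0 i0 = n i0 i0 -> m i0 i1 = n i0 i1 -> m i1 i0 = n i1 i0 -> m i1 i1 = n i1 i1 ->
  m = n.
Proof.
move=> e00 e01 e10 e11; apply/matrixP => i j.
by case: (ord2P i) => ->; case: (ord2P j) => ->.
Qed.

Lemma mulmx2E (m n : M) i j : (m *m n) i j = m i i0 * n i0 j + m i i1 * n i1 j.
Proof.
rewrite mxE !big_ord_recl big_ord0 addr0.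
by have -> : lift i0 (@ord0 0) = i1 by apply: val_inj.
Qed.

Lemma det2E (m : M) : \det m = m i0 i0 * m i1 i1 - m i0 i1 * m i1 i0.
Proof.
rewrite (expand_det_row _ i0) !big_ord_recl big_ord0 addr0 /cofactor !det_mx11 !mxE /=.
have -> : lift i0 (0 : 'I_1) = i1 by apply: val_inj.
have -> : lift i1 (0 : 'I_1) = i0 by apply: val_inj.
by rewrite expr0 expr1 !mul1r mulN1r mulrN.
Qed.

Definition mx2 (a b c d : F) : M :=
  \matrix_(i, j) if i == i0 then if j == i0 then a else b else if j == i0 then c else d.

Lemma mx2E a b c d :
  (mx2 a b c d i0 i0 = a) * (mx2 a b c d i0 i1 = b) *
  (mx2 a b c d i1 i0 = c) * (mx2 a b c d i1 i1 = d).
Proof. by rewrite !mxE. Qed.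

Lemma mx2_1 : 1%:M = mx2 1 0 0 1.
Proof. by apply: mx2_eq; rewrite !mxE. Qed.

Lemma sl2_unit (m : M) : inSL2 m -> m \in unitmx.
Proof. by rewrite unitmxE => /eqP ->; apply: unitr1. Qed.

Lemma sl2_1 : inSL2 (1%:M : M).
Proof. by rewrite /inSL2 det1. Qed.

Lemma sl2_mull (m n : M) : inSL2 m -> inSL2 (m *m n) = inSL2 n.
Proof. by move=> /eqP slm; rewrite /inSL2 det_mulmx slm mul1r. Qed.

Lemma sl2_mulr (m n : M) : inSL2 n -> inSL2 (m *m n) = inSL2 m.
Proof. by move=> /eqP sln; rewrite /inSL2 det_mulmx sln mulr1. Qed.

Lemma sl2_invmx (m : M) : inSL2 m -> inSL2 (invmx m).
Proof. by move=> /eqP slm; rewrite /inSL2 det_inv slm invr1. Qed.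

Lemma invmxM (m n : M) :
  m \in unitmx -> n \in unitmx -> invmx (m *m n) = invmx n *m invmx m.
Proof. exact: invrM. Qed.

Lemma invmx_sl2 (m : M) :
  inSL2 m -> invmx m = mx2 (m i1 i1) (- m i0 i1) (- m i1 i0) (m i0 i0).
Proof.
move=> slm; have /eqP := slm; rewrite det2E => det1.
have inv : m *m mx2 (m i1 i1) (- m i0 i1) (- m i1 i0) (m i0 i0) = 1%:M.
  by rewrite mx2_1; apply: mx2_eq; rewrite mulmx2E !mx2E -?det1; ring.
by rewrite -[invmx m]mulmx1 -inv mulmxA mulVmx ?mul1mx ?sl2_unit.
Qed.

Lemma sl2_diag_neq0 (m : M) : inSL2 m -> (m i0 i1 == 0) || (m i1 i0 == 0) ->
  (m i0 i0 != 0) && (m i1 i1 != 0).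
Proof.
rewrite /inSL2 det2E => /eqP det1 m_0.
have ad1 : m i0 i0 * m i1 i1 = 1.
  by case/orP: m_0 => /eqP m_0; rewrite -det1 m_0 ?mul0r ?mulr0 subr0.
by rewrite -negb_or -mulf_eq0 ad1 oner_eq0.
Qed.

Lemma sl2_no_zero_line (m : M) : inSL2 m ->
  ~~ [|| (m i0 i0 == 0) && (m i0 i1 == 0), (m i0 i0 == 0) && (m i1 i0 == 0),
         (m i1 i1 == 0) && (m i0 i1 == 0) | (m i1 i1 == 0) && (m i1 i0 == 0)].
Proof.
rewrite /inSL2 det2E => /eqP det1; apply/negP => /or4P[] /andP[/eqP e1 /eqP e2];
  by move: det1; rewrite e1 e2 ?mul0r ?mulr0 subrr => /eqP; rewrite eq_sym oner_eq0.
Qed.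

Definition w : M := mx2 0 (-1) 1 0.

Lemma sl2_w : inSL2 w.
Proof. by rewrite /inSL2 det2E !mx2E; apply/eqP; ring. Qed.

Lemma sl2_mulw (m : M) : inSL2 (w *m m) = inSL2 m.
Proof. exact: sl2_mull sl2_w. Qed.

Lemma mulwE (m : M) :
  ((w *m m) i0 i0 = - m i1 i0) * ((w *m m) i0 i1 = - m i1 i1) *
  ((w *m m) i1 i0 = m i0 i0) * ((w *m m) i1 i1 = m i0 i1).
Proof. by rewrite !mulmx2E !mx2E; do !split; ring. Qed.

Lemma mulmxwE (m : M) :
  ((m *m w) i0 i0 = m i0 i1) * ((m *m w) i0 i1 = - m i0 i0) *
  ((m *m w) i1 i0 = m i1 i1) * ((m *m w) i1 i1 = - m i1 i0).
Proof. by rewrite !mulmx2E !mx2E; do !split; ring. Qed.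

Lemma grmulE (f g : M -> int) x : grmul f g x =
  if inSL2 x then \sum_(a | inSL2 a) f a * g (invmx a *m x) else 0.
Proof.
rewrite /grmul; case: ifP => slx.
  apply: eq_bigr => a sla; rewrite (big_pred1 (invmx a *m x)) // => b /=.
  apply/andP/eqP => [[_ /eqP <-] | ->]; first by rewrite mulKmx ?sl2_unit.
  by rewrite sl2_mull ?sl2_invmx // slx mulKVmx ?sl2_unit.
rewrite big1 // => a sla; rewrite big_pred0 // => b.
by apply/negbTE/andP => -[slb /eqP abx]; move: slx; rewrite -abx sl2_mull // slb.
Qed.

Lemma eq_grmul (f f' g g' : M -> int) : f =1 f' -> g =1 g' -> grmul f g =1 grmul f' g'.
Proof. by move=> eqf eqg x; apply: eq_bigr => a _; apply: eq_bigr => b _; rewrite eqf eqg. Qed.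

Lemma grmul_transl (u : M) (f g : M -> int) x : inSL2 u ->
  grmul (fun m => f (u *m m)) g x = grmul f g (u *m x).
Proof.
move=> slu; have uu := sl2_unit slu.
rewrite !grmulE sl2_mull //; case: ifP => // slx.
rewrite [RHS](reindex_inj (can_inj (mulKmx uu))) /=.
apply: eq_big => a; first by rewrite sl2_mull.
by move=> sla; rewrite invmxM ?sl2_unit // -mulmxA mulKmx.
Qed.

Lemma grmul_trans_mid (u : M) (f g : M -> int) x : inSL2 u ->
  grmul f (fun m => g (u *m m)) x = grmul (fun m => f (m *m u)) g x.
Proof.
move=> slu; have uu := sl2_unit slu.
rewrite !grmulE; case: ifP => // slx.
rewrite [RHS](reindex_inj (can_inj (mulmxKV uu))) /=.
apply: eq_big => a; first by rewrite sl2_mulr ?sl2_invmx.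
move=> sla; rewrite mulmxKV // invmxM ?sl2_unit ?sl2_invmx // invmxK.
by rewrite mulmxA.
Qed.

Lemma grmul_bilinear (I J : finType) (c : I -> int) (d : J -> int)
    (fs : I -> M -> int) (gs : J -> M -> int) x :
  grmul (fun m => \sum_i c i * fs i m) (fun m => \sum_j d j * gs j m) x =
  \sum_i c i * \sum_j d j * grmul (fs i) (gs j) x.
Proof.
rewrite /grmul.
transitivity (\sum_i \sum_j \sum_(a | inSL2 a) \sum_(b | inSL2 b && (a *m b == x))
                c i * fs i a * (d j * gs j b)).
  under eq_bigr do under eq_bigr do rewrite big_distrlr /=.
  under eq_bigr do rewrite exchange_big /=.
  rewrite [LHS]exchange_big /=; apply: eq_bigr => i _.
  by under eq_bigr do rewrite exchange_big /=; rewrite [LHS]exchange_big.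
apply: eq_bigr => i _; rewrite big_distrr; apply: eq_bigr => j _ /=.
rewrite mulrA [_ * d j]mulrC -mulrA !big_distrr; apply: eq_bigr => a _.
by rewrite !big_distrr; apply: eq_bigr => b _; rewrite /= mulrCA !mulrA.
Qed.

Definition sl2_subgroup (H : pred M) : Prop :=
  [/\ forall a, H a -> inSL2 a, H 1%:M, {in H &, forall a b, H (a *m b)}
    & {in H, forall a, H (invmx a)}].

Definition prodset (H K : pred M) (x : M) : bool :=
  [exists h, exists k, [&& H h, K k & x == h *m k]].

Lemma prodsetP (H K : pred M) x :
  reflect (exists2 h, H h & exists2 k, K k & x = h *m k) (prodset H K x).
Proof.
apply: (iffP existsP) => [[h /existsP[k /and3P[Hh Kk /eqP->]]] | [h Hh [k Kk ->]]].
  by exists h => //; exists k.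
by exists h; apply/existsP; exists k; rewrite Hh Kk eqxx.
Qed.

Section Subgroup.

Variable H : pred M.
Hypothesis sgH : sl2_subgroup H.

Lemma subgroup_mull h a : H h -> H (h *m a) = H a.
Proof.
case: sgH => slH _ mulH invH Hh; apply/idP/idP => [Hha | Ha]; last exact: mulH Hh Ha.
by rewrite -[a](mulKmx (sl2_unit (slH _ Hh))); apply: mulH => //; apply: invH.
Qed.

Lemma subgroup_mulr k a : H k -> H (a *m k) = H a.
Proof.
case: sgH => slH _ mulH invH Hk; apply/idP/idP => [Hak | Ha]; last exact: mulH Ha Hk.
by rewrite -[a](mulmxK (sl2_unit (slH _ Hk))); apply: mulH => //; apply: invH.
Qed.

Lemma subgroup_invmx a : H (invmx a) = H a.
Proof.
case: sgH => _ _ _ invH; apply/idP/idP => [Ha' | /invH //].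
by rewrite -[a]invmxK invH.
Qed.

End Subgroup.

Section SubgroupProduct.

Variables H K : pred M.
Hypotheses (sgH : sl2_subgroup H) (sgK : sl2_subgroup K).

Lemma prodset_sl2 x : prodset H K x -> inSL2 x.
Proof.
case: sgH sgK => slH _ _ _ [slK _ _ _] /prodsetP[h Hh [k Kk ->]].
by rewrite (sl2_mull _ (slH _ Hh)) (slK _ Kk).
Qed.

Lemma prodset_l x : K x -> prodset H K x.
Proof.
by case: sgH => _ H1 _ _ Kx; apply/prodsetP; exists 1%:M => //; exists x; rewrite ?mul1mx.
Qed.

Lemma prodset_r x : H x -> prodset H K x.
Proof.
by case: sgK => _ K1 _ _ Hx; apply/prodsetP; exists x => //; exists 1%:M; rewrite ?mulmx1.
Qed.

Lemma grmul_subgroups x :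
  grmul (fun m => (H m)%:Z) (fun m => (K m)%:Z) x = #|predI H K|%:Z * (prodset H K x)%:Z.
Proof.
case: (sgH) => slH _ _ _.
rewrite grmulE; case: ifP => slx.
  case: prodsetP => [[h Hh [k Kk xE]] | noHK]; last first.
    rewrite mulr0 big1 // => a sla.
    case: (boolP (H a)) => Ha; last by rewrite mul0r.
    case: (boolP (K _)) => Kb; last by rewrite mulr0.
    by case: noHK; exists a => //; exists (invmx a *m x); rewrite // mulKVmx ?sl2_unit.
  (* Substituting h a for a makes the term at a equal to [a \in H ∩ K]. *)
  have uh := sl2_unit (slH _ Hh).
  rewrite mulr1 (reindex_inj (can_inj (mulKmx uh))) /= -natz -sumr_const.
  rewrite [RHS](eq_bigl (fun a => inSL2 a && (H a && K a))) => [|a]; last first.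
    by rewrite inE; case: (boolP (H a)) => [/slH -> | _]; rewrite ?andbF.
  rewrite [RHS]big_mkcondr; apply: eq_big => a; first by rewrite (sl2_mull _ (slH _ Hh)).
  move=> slha; have sla : inSL2 a by rewrite -(sl2_mull a (slH _ Hh)).
  rewrite subgroup_mull // xE (invmxM uh (sl2_unit sla)).
  rewrite -mulmxA mulKmx // subgroup_mulr // subgroup_invmx //.
  by case: (H a); case: (K a).
by rewrite (contraNF (@prodset_sl2 x) (negbT slx)) mulr0.
Qed.

End SubgroupProduct.

(* [std zu zl] is the subgroup of SL_2 whose upper-right entry vanishes if [zu]
   and whose lower-left entry vanishes if [zl]: SL_2 itself, the lower and upper
   Borel subgroups, and the diagonal torus. *)
Definition std (zu zl : bool) (m : M) : bool :=
  [&& inSL2 m, zu ==> (m i0 i1 == 0) & zl ==> (m i1 i0 == 0)].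

Lemma std_sl2 zu zl m : std zu zl m -> inSL2 m.
Proof. by case/and3P. Qed.

Lemma std_le zu zl zu' zl' m :
  zu' ==> zu -> zl' ==> zl -> std zu zl m -> std zu' zl' m.
Proof.
move=> /implyP le_u /implyP le_l /and3P[slm /implyP mu /implyP ml].
rewrite /std slm /=; apply/andP; split; apply/implyP => z.
  exact: mu (le_u z).
exact: ml (le_l z).
Qed.

Lemma sl2_subgroup_std zu zl : sl2_subgroup (std zu zl).
Proof.
split=> [m /std_sl2 // | | m n | m].
- by rewrite /std sl2_1 mx2_1 !mx2E eqxx !implybT.
- move=> /and3P[slm /implyP mu /implyP ml] /and3P[sln /implyP nu /implyP nl].
  rewrite /std sl2_mull // sln !mulmx2E /=.
  apply/andP; split; apply/implyP => z.
    by rewrite (eqP (mu z)) (eqP (nu z)) mul0r mulr0 addr0.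
  by rewrite (eqP (ml z)) (eqP (nl z)) mul0r mulr0 add0r.
- move=> /and3P[slm mu ml].
  by rewrite /std sl2_invmx // invmx_sl2 // !mx2E !oppr_eq0 mu ml.
Qed.

Lemma std_mulmxw zu zl m : std zu zl (m *m w) = std zl zu (w *m m).
Proof.
rewrite /std !mulmxwE !mulwE !oppr_eq0 sl2_mulw (sl2_mulr _ sl2_w).
by rewrite [in RHS](andbC (zl ==> _)).
Qed.

Lemma prodset_std zu zl zu' zl' x :
    ~~ [&& zu, ~~ zl, ~~ zu' & zl'] -> ~~ [&& ~~ zu, zl, zu' & ~~ zl'] ->
  prodset (std zu zl) (std zu' zl') x = std (zu && zu') (zl && zl') x.
Proof.
move=> not_lu not_ul; apply/idP/idP.
  case: (sl2_subgroup_std (zu && zu') (zl && zl')) => _ _ mulH _.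
  case/prodsetP => h Hh [k Kk ->]; apply: mulH.
    by apply: std_le Hh; apply/implyP => /andP[].
  by apply: std_le Kk; apply/implyP => /andP[].
by move: not_lu not_ul; case: zu zl zu' zl' => [] [] [] [] //= _ _ Hx;
  first [exact: (prodset_r (sl2_subgroup_std _ _)) | exact: (prodset_l (sl2_subgroup_std _ _))].
Qed.

Lemma prodset_lower_upper x :
  prodset (std true false) (std false true) x = inSL2 x && (x i0 i0 != 0).
Proof.
apply/idP/andP => [HKx | [slx x00]].
  split; first exact: (prodset_sl2 (sl2_subgroup_std _ _) (sl2_subgroup_std _ _) HKx).
  case/prodsetP: HKx => h /and3P[slh /eqP h01 _] [k /and3P[slk _ /eqP k10] ->].
  have /andP[h00 _] : (h i0 i0 != 0) && (h i1 i1 != 0).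
    by apply: (sl2_diag_neq0 slh); rewrite h01 eqxx.
  have /andP[k00 _] : (k i0 i0 != 0) && (k i1 i1 != 0).
    by apply: (sl2_diag_neq0 slk); rewrite k10 eqxx orbT.
  by rewrite mulmx2E h01 mul0r addr0 mulf_neq0.
have /eqP := slx; rewrite det2E => det1.
apply/prodsetP; exists (mx2 (x i0 i0) 0 (x i1 i0) (x i0 i0)^-1).
  by rewrite /std /inSL2 det2E !mx2E eqxx /= ?andbT; apply/eqP; field.
exists (mx2 1 (x i0 i1 / x i0 i0) 0 1).
  by rewrite /std /inSL2 det2E !mx2E eqxx /= ?andbT; apply/eqP; field.
have x11E : x i1 i1 = (1 + x i0 i1 * x i1 i0) / x i0 i0 by rewrite -det1; field.
by apply: mx2_eq; rewrite mulmx2E !mx2E ?x11E; field.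
Qed.

Lemma prodset_upper_lower x :
  prodset (std false true) (std true false) x = inSL2 x && (x i1 i1 != 0).
Proof.
apply/idP/andP => [HKx | [slx x11]].
  split; first exact: (prodset_sl2 (sl2_subgroup_std _ _) (sl2_subgroup_std _ _) HKx).
  case/prodsetP: HKx => h /and3P[slh _ /eqP h10] [k /and3P[slk /eqP k01 _] ->].
  have /andP[_ h11] : (h i0 i0 != 0) && (h i1 i1 != 0).
    by apply: (sl2_diag_neq0 slh); rewrite h10 eqxx orbT.
  have /andP[_ k11] : (k i0 i0 != 0) && (k i1 i1 != 0).
    by apply: (sl2_diag_neq0 slk); rewrite k01 eqxx.
  by rewrite mulmx2E h10 mul0r add0r mulf_neq0.
have /eqP := slx; rewrite det2E => det1.
apply/prodsetP; exists (mx2 (x i1 i1)^-1 (x i0 i1) 0 (x i1 i1)).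
  by rewrite /std /inSL2 det2E !mx2E eqxx /= ?andbT; apply/eqP; field.
exists (mx2 1 0 (x i1 i0 / x i1 i1) 1).
  by rewrite /std /inSL2 det2E !mx2E eqxx /= ?andbT; apply/eqP; field.
have x00E : x i0 i0 = (1 + x i0 i1 * x i1 i0) / x i1 i1 by rewrite -det1; field.
by apply: mx2_eq; rewrite mulmx2E !mx2E ?x00E; field.
Qed.

Definition pattern (m : M) : bool * bool * bool * bool :=
  (m i0 i0 == 0, m i0 i1 == 0, m i1 i0 == 0, m i1 i1 == 0).

Definition pattern_const (h : M -> int) : Prop :=
  (forall m, ~~ inSL2 m -> h m = 0) /\
  (forall m m', inSL2 m -> inSL2 m' -> pattern m = pattern m' -> h m = h m').

Lemma pattern_const_ext (h h' : M -> int) : h =1 h' -> pattern_const h -> pattern_const h'.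
Proof.
by move=> eqh [h0 hP]; split=> [m | m m' slm slm']; rewrite -!eqh; [apply: h0 | apply: hP].
Qed.

Lemma pattern_constZ c (h : M -> int) : pattern_const h -> pattern_const (fun m => c * h m).
Proof. by move=> [h0 hP]; split=> [m /h0 -> | m m' slm slm' /hP ->]; rewrite ?mulr0. Qed.

Lemma pattern_const_sum (I : finType) (c : I -> int) (hs : I -> M -> int) :
  (forall i, pattern_const (hs i)) -> pattern_const (fun m => \sum_i c i * hs i m).
Proof.
move=> hsP; split=> [m slm | m m' slm slm' pmm'].
  by rewrite big1 // => i _; case: (hsP i) => h0 _; rewrite h0 ?mulr0.
by apply: eq_bigr => i _; case: (hsP i) => _ hP; rewrite (hP m m').
Qed.

Lemma pattern_const_mulw (h : M -> int) : pattern_const h -> pattern_const (fun m => h (w *m m)).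
Proof.
move=> [h0 hP]; split=> [m slm | m m' slm slm' pmm'].
  by apply: h0; rewrite sl2_mulw.
apply: hP; rewrite ?sl2_mulw //.
by move: pmm'; rewrite /pattern !mulwE !oppr_eq0 => -[-> -> -> ->].
Qed.

Lemma pattern_const_prodset_std zu zl zu' zl' :
  pattern_const (fun x => (prodset (std zu zl) (std zu' zl') x)%:Z).
Proof.
have sl2_prodset := prodset_sl2 (sl2_subgroup_std zu zl) (sl2_subgroup_std zu' zl').
split=> [m slm | m m' slm slm']; first by rewrite (contraNF (@sl2_prodset m)).
clear sl2_prodset; rewrite /pattern => -[e00 e01 e10 e11].
case: zu zl zu' zl' => [] [] [] [];
  rewrite ?prodset_lower_upper ?prodset_upper_lower ?prodset_std //= /std;
  by rewrite ?e00 ?e01 ?e10 ?e11 ?slm ?slm'.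
Qed.

Lemma pattern_const_grmul_std zu zl zu' zl' :
  pattern_const (grmul (fun m => (std zu zl m)%:Z) (fun m => (std zu' zl' m)%:Z)).
Proof.
apply: pattern_const_ext (pattern_constZ _ (pattern_const_prodset_std zu zl zu' zl')) => x.
by rewrite (grmul_subgroups (sl2_subgroup_std _ _) (sl2_subgroup_std _ _)).
Qed.

Lemma pattern_const_grmul_mulwl (f g : M -> int) :
  pattern_const (grmul f g) -> pattern_const (grmul (fun m => f (w *m m)) g).
Proof. by move/pattern_const_mulw; apply: pattern_const_ext => x; rewrite grmul_transl ?sl2_w. Qed.

Lemma pattern_const_grmul_mulwr (f g : M -> int) :
  pattern_const (grmul (fun m => f (m *m w)) g) -> pattern_const (grmul f (fun m => g (w *m m))).
Proof. by apply: pattern_const_ext => x; rewrite grmul_trans_mid ?sl2_w. Qed.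

Definition coset_ind (i : bool * bool * bool) (m : M) : int :=
  let: (s, zu, zl) := i in (std zu zl (if s then w *m m else m))%:Z.

Lemma pattern_const_grmul_coset i j : pattern_const (grmul (coset_ind i) (coset_ind j)).
Proof.
have base := pattern_const_grmul_std.
case: i j => [[[] zu zl]] [[[] zu' zl']]; rewrite /coset_ind /=.
- apply: (pattern_const_grmul_mulwr (f := fun m => (std zu zl (w *m m))%:Z)
    (g := fun m => (std zu' zl' m)%:Z)).
  apply: pattern_const_ext (pattern_const_grmul_mulwl
    (pattern_const_grmul_mulwl (f := fun m => (std zl zu m)%:Z) (base zl zu zu' zl'))).
  by apply: eq_grmul => // m; rewrite [w *m (m *m w)]mulmxA std_mulmxw.
- exact: (pattern_const_grmul_mulwl (f := fun m => (std zu zl m)%:Z)).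
- apply: (pattern_const_grmul_mulwr (f := fun m => (std zu zl m)%:Z)
    (g := fun m => (std zu' zl' m)%:Z)).
  apply: pattern_const_ext (pattern_const_grmul_mulwl (f := fun m => (std zl zu m)%:Z)
    (base zl zu zu' zl')).
  by apply: eq_grmul => // m; rewrite std_mulmxw.
- exact: base.
Qed.

Definition coset_span (f : M -> int) : Prop :=
  exists c : bool * bool * bool -> int, forall m, f m = \sum_i c i * coset_ind i m.

Lemma pattern_const_grmul_span (f g : M -> int) :
  coset_span f -> coset_span g -> pattern_const (grmul f g).
Proof.
move=> [c fE] [d gE].
apply: pattern_const_ext (pattern_const_sum c
  (fun i => pattern_const_sum d (fun j => pattern_const_grmul_coset i j))) => x.
by rewrite (eq_grmul fE gE) grmul_bilinear.
Qed.

Lemma coset_span_ext (f g : M -> int) : f =1 g -> coset_span g -> coset_span f.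
Proof. by move=> eqfg [c gE]; exists c => m; rewrite eqfg. Qed.

Lemma coset_span_ind j : coset_span (coset_ind j).
Proof.
exists (fun i => (i == j)%:Z) => m; rewrite (bigD1 j) //= eqxx mul1r big1 ?addr0 // => i.
by move/negbTE ->; rewrite mul0r.
Qed.

Lemma coset_spanD (f g : M -> int) :
  coset_span f -> coset_span g -> coset_span (fun m => f m + g m).
Proof.
move=> [c fE] [d gE]; exists (fun i => c i + d i) => m.
by rewrite fE gE -big_split; apply: eq_bigr => i _; rewrite mulrDl.
Qed.

Lemma coset_spanZ a (f : M -> int) : coset_span f -> coset_span (fun m => a * f m).
Proof.
move=> [c fE]; exists (fun i => a * c i) => m.
by rewrite fE mulr_sumr; apply: eq_bigr => i _; rewrite mulrA.
Qed.

Lemma coset_spanB (f g : M -> int) :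
  coset_span f -> coset_span g -> coset_span (fun m => f m - g m).
Proof.
move=> sf /(coset_spanZ (-1)) sg; apply: (coset_span_ext _ (coset_spanD sf sg)) => m.
by rewrite mulN1r.
Qed.

Ltac case_support m :=
  rewrite /elA /elB /elC /elDp /elDm /elEp /elEm /supp_elt /entry_ok /coset_ind /std /=
    ?mulwE ?oppr_eq0 ?sl2_mulw;
  move: (@sl2_no_zero_line m);
  case: (m i0 i0 == 0); case: (m i0 i1 == 0); case: (m i1 i0 == 0); case: (m i1 i1 == 0);
  case: (inSL2 m) => //= /(_ isT).

Lemma elA_coset : @elA F =1 coset_ind (false, true, true).
Proof. by move=> m; case_support m. Qed.

Lemma elB_coset : @elB F =1 coset_ind (true, true, true).
Proof. by move=> m; case_support m. Qed.

Lemma elDp_coset :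
  @elDp F =1 fun m => coset_ind (false, false, true) m - coset_ind (false, true, true) m.
Proof. by move=> m; case_support m. Qed.

Lemma elDm_coset :
  @elDm F =1 fun m => coset_ind (false, true, false) m - coset_ind (false, true, true) m.
Proof. by move=> m; case_support m. Qed.

Lemma elEp_coset :
  @elEp F =1 fun m => coset_ind (true, true, false) m - coset_ind (true, true, true) m.
Proof. by move=> m; case_support m. Qed.

Lemma elEm_coset :
  @elEm F =1 fun m => coset_ind (true, false, true) m - coset_ind (true, true, true) m.
Proof. by move=> m; case_support m. Qed.

Lemma elC_coset : @elC F =1 fun m =>
  coset_ind (false, false, false) m - coset_ind (false, false, true) m
  - coset_ind (false, true, false) m + coset_ind (false, true, true) m
  - coset_ind (true, true, false) m - coset_ind (true, false, true) m
  + coset_ind (true, true, true) m.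
Proof. by move=> m; case_support m. Qed.

Lemma inSC_coset_span (f : M -> int) : inSC f -> coset_span f.
Proof.
move=> [a [b [c [dp [dm [ep [em fE]]]]]]]; apply: (coset_span_ext fE).
repeat apply: coset_spanD; apply: coset_spanZ;
  [ apply: (coset_span_ext elA_coset) | apply: (coset_span_ext elB_coset)
  | apply: (coset_span_ext elC_coset) | apply: (coset_span_ext elDp_coset)
  | apply: (coset_span_ext elDm_coset) | apply: (coset_span_ext elEp_coset)
  | apply: (coset_span_ext elEm_coset) ];
  by repeat first [apply: coset_spanB | apply: coset_spanD | apply: coset_span_ind].
Qed.

Lemma pattern_const_inSC (h : M -> int) : pattern_const h -> inSC h.
Proof.
move=> [h0 hP].
pose rep p := if [pick m | inSL2 m && (pattern m == p)] is Some m then h m else 0.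
have repE m : inSL2 m -> h m = rep (pattern m).
  rewrite /rep => slm; case: pickP => [m' /andP[slm' /eqP pm'] | /(_ m)].
    exact: hP.
  by rewrite slm eqxx.
exists (rep (false, true, true, false)), (rep (true, false, false, true)),
  (rep (false, false, false, false)), (rep (false, false, true, false)),
  (rep (false, true, false, false)), (rep (false, false, false, true)),
  (rep (true, false, false, false)) => m.
rewrite /elA /elB /elC /elDp /elDm /elEp /elEm /supp_elt /entry_ok.
case: (boolP (inSL2 m)) => slm; last by rewrite h0 // !andbF !mulr0 !addr0.
rewrite repE // /pattern !andbT; move: (sl2_no_zero_line slm).
case: (m i0 i0 == 0); case: (m i0 i1 == 0); case: (m i1 i0 == 0); case: (m i1 i1 == 0) => //= _;
  by rewrite !(mulr0, mulr1, addr0, add0r).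
Qed.

End SL2GroupRing.

Theorem theorem2p1 (F : finFieldType) (hq : (2 < #|F|)%N)
  (f g : 'M[F]_2 -> int) :
  inSC f -> inSC g -> inSC (grmul f g).
Proof.
move=> /inSC_coset_span SCf /inSC_coset_span SCg.
exact/pattern_const_inSC/pattern_const_grmul_span.
Qed.
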